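(* In any execution of Algorithm $\mathsf{AG}$ (described in the context) with a guild, if a process in the maximal guild sends a $\mathrm{Confirm}$ message, then there exists a process in the maximal guild that has received $\mathrm{Ready}$ messages from all members of at least one of its quorums.
   Context: System model: a finite set $\mathcal{P}=\{p_1,\dots,p_n\}$ of processes communicating asynchronously over authenticated point-to-point links; every message sent from a correct process to a correct process is eventually delivered. A process that follows its protocol is correct; others (faulty, Byzantine) may behave arbitrarily. $F\subseteq\mathcal{P}$ denotes the (unknown) set of faulty processes of an execution. For $\mathcal{A}\subseteq 2^{\mathcal{P}}$, write $\mathcal{A}^*=\{A' : A'\subseteq A,\ A\in\mathcal{A}\}$. An asymmetric fail-prone system is an array $\mathbb{F}=[\mathcal{F}_1,\dots,\mathcal{F}_n]$ with $\mathcal{F}_i\subseteq 2^{\mathcal{P}}$. An asymmetric Byzantine quorum system for $\mathbb{F}$ is an array $\mathbb{Q}=[\mathcal{Q}_1,\dots,\mathcal{Q}_n]$ with $\mathcal{Q}_i\subseteq 2^{\mathcal{P}}$ (quorums for $p_i$) satisfying: (consistency) for all $i,j$, all $Q_i\in\mathcal{Q}_i$, $Q_j\in\mathcal{Q}_j$, $F_{ij}\in\mathcal{F}_i^*\cap\mathcal{F}_j^*$: $Q_i\cap Q_j\not\subseteq F_{ij}$; (availability) for all $i$ and $F_i\in\mathcal{F}_i$ there is $Q_i\in\mathcal{Q}_i$ with $F_i\cap Q_i=\emptyset$. A kernel for $p_i$ is a set $K\subseteq\mathcal{P}$ intersecting every $Q\in\mathcal{Q}_i$; $\mathcal{K}_i$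 is the set of kernels for $p_i$. A correct process $p_i$ is wise if $F\in\mathcal{F}_i^*$. A guild is a set $\mathcal{G}$ of wise processes such that every $p_i\in\mathcal{G}$ has some $Q_i\in\mathcal{Q}_i$ with $Q_i\subseteq\mathcal{G}$. An execution with a guild is one in which a nonempty guild exists; the maximal guild $\mathcal{G}_{max}$ is the union of all guilds. Asymmetric reliable broadcast (arb-broadcast / arb-deliver) guarantees, in every execution with a guild: if a correct process arb-broadcasts $m$, every process of $\mathcal{G}_{max}$ eventually arb-delivers $m$; for each sender, all processes of $\mathcal{G}_{max}$ that arb-deliver from it deliver the same message; if some process of $\mathcal{G}_{max}$ arb-delivers a message from a sender, all processes of $\mathcal{G}_{max}$ eventually arb-deliver a message from that sender; a correct process arb-delivers at most one message per sender, and from a correct sender only a message it arb-broadcast. Algorithm $\mathsf{AG}$ (code of $p_i$; each correct process invokes ag-propose$(x_i)$ exactly once; each guarded ''upon there being ...'' action executes at most once, message handlers once per message). State: sets $S_i,T_i,U_i$ initially empty, boolean $sentT$ initially false. (1) Upon ag-propose$(x_i)$: arb-broadcast $(p_i,x_i)$. (2) Upon arb-delivering $(p_j,x_j)$ from $p_j$: $S_i\gets S_i\cup\{(p_j,x_j)\}$. (3) Upon there being $Q\in\mathcal{Q}_i$ such that for every $p_j\in Q$ some pair $(p_j,\cdot)\in S_i$: send $\langle\mathrm{DistributeS},p_i,S_i\rangle$ to all. (4) For a received $\langle\mathrm{DistributeS},p_j,S_j\rangle$: once $S_j\subseteq S_i$, provided $sentT$ is false at that moment, set $T_i\gets T_i\cup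 S_j$ and send $\langle\mathrm{Ack},p_i\rangle$ to $p_j$. (5) Upon Ack received from every member of some $Q\in\mathcal{Q}_i$: send Ready to all. (6) Upon Ready received from every member of some $Q\in\mathcal{Q}_i$: send Confirm to all. (7) Upon Confirm received from every member of some $K\in\mathcal{K}_i$: send Confirm to all. (8) Upon Confirm received from every member of some $Q\in\mathcal{Q}_i$: send $\langle\mathrm{DistributeT},p_i,T_i\rangle$ to all and set $sentT\gets$ true. (9) For a received $\langle\mathrm{DistributeT},p_j,T_j\rangle$ from $p_j$: once $T_j\subseteq S_i$, set $U_i\gets U_i\cup T_j$. (10) Upon DistributeT received from every member of some $Q\in\mathcal{Q}_i$: ag-deliver$(U_i)$. *)

From mathcomp Require Import all_boot.
Set Implicit Arguments. Unset Strict Implicit. Unset Printing Implicit Defensive.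

Section AG.
Variable n : nat.
Notation P := 'I_n.
Variable V : eqType.   (* proposal values *)

Definition star (A : {set {set P}}) : {set {set P}} :=
  [set A' : {set P} | [exists A0 in A, A' \subset A0]].

Definition asym_quorum_system (F Q : P -> {set {set P}}) : Prop :=
  (forall i j (Qi Qj Fij : {set P}), Qi \in Q i -> Qj \in Q j ->
      Fij \in star (F i) -> Fij \in star (F j) -> ~~ (Qi :&: Qj \subset Fij))
  /\ (forall i (Fi : {set P}), Fi \in F i ->
      exists2 Qi, Qi \in Q i & [disjoint Fi & Qi]).

Definition kernel (Q : P -> {set {set P}}) (i : P) (K : {set P}) : bool :=
  [forall q in Q i, K :&: q != set0].

(** [Fset] is the set of faulty processes of the execution. *)
Definition wise (F : P -> {set {set P}}) (Fset : {set P}) (i : P) : bool :=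
  (i \notin Fset) && (Fset \in star (F i)).

Definition guild (F Q : P -> {set {set P}}) (Fset : {set P}) (G : {set P}) : bool :=
  [forall i in G, wise F Fset i && [exists q in Q i, q \subset G]].

Definition Gmax (F Q : P -> {set {set P}}) (Fset : {set P}) : {set P} :=
  \bigcup_(G : {set P} | guild F Q Fset G) G.

Definition has_guild (F Q : P -> {set {set P}}) (Fset : {set P}) : Prop :=
  exists G : {set P}, guild F Q Fset G /\ G != set0.

(* Links are authenticated, so the sender identity carried in
   <DistributeS,p_j,S_j>, <Ack,p_i>, <DistributeT,p_j,T_j> is the
   (authenticated) sender of the message. *)
Inductive msg :=
| DistributeS of seq (P * V)
| Ack
| Ready
| Confirm
| DistributeT of seq (P * V).

Inductive event :=
| Propose of P & V                   (* ag-propose(x) invoked at p_i *)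
| ArbBcast of P & V                  (* p_i arb-broadcasts (p_i,x) *)
| ArbDeliver of P & P & V            (* p_i arb-delivers (p_j,x) from p_j *)
| Send of P & P & msg                (* p_i sends m to p_j *)
| Recv of P & P & msg                (* p_i receives m from p_j *)
| AddT of P & P & seq (P * V)        (* p_i executes T_i <- T_i ∪ S_j for the DistributeS of p_j *)
| AddU of P & P & seq (P * V)        (* p_i executes U_i <- U_i ∪ T_j for the DistributeT of p_j *)
| AgDeliver of P & seq (P * V).      (* p_i ag-delivers U *)

(* An execution is a (possibly infinite) sequence of events; None = no step. *)
Definition trace := nat -> option event.

Definition before (tr : trace) (t : nat) (e : event) : Prop :=
  exists2 t', t' < t & tr t' = Some e.

(* local state of p_i just before time t *)
Definition Sst (tr : trace) (i : P) (t : nat) (p : P * V) : Prop :=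
  before tr t (ArbDeliver i p.1 p.2).
Definition Tst (tr : trace) (i : P) (t : nat) (p : P * V) : Prop :=
  exists j Sj, before tr t (AddT i j Sj) /\ p \in Sj.
Definition Ust (tr : trace) (i : P) (t : nat) (p : P * V) : Prop :=
  exists j T, before tr t (AddU i j T) /\ p \in T.
Definition sentT (tr : trace) (i : P) (t : nat) : Prop :=
  exists j T, before tr t (Send i j (DistributeT T)).


Definition recv_all (tr : trace) (i : P) (t : nat) (A : {set P}) (m : msg) : Prop :=
  forall k, k \in A -> before tr t (Recv i k m).

Definition recv_all_kind (tr : trace) (i : P) (t : nat) (A : {set P})
    (kind : msg -> Prop) : Prop :=
  forall k, k \in A -> exists m, kind m /\ before tr t (Recv i k m).

Definition is_DistT (m : msg) : Prop := exists T, m = DistributeT T.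

Definition set_eq (s : seq (P * V)) (A : P * V -> Prop) : Prop :=
  forall p, p \in s <-> A p.

(** Steps a correct process [i] may take at time [t] (safety of the code of AG). *)
Definition correct_step (Q : P -> {set {set P}}) (tr : trace) (t : nat) (e : event) : Prop :=
  match e with
  | Propose i x => ~ (exists y, before tr t (Propose i y))
  | ArbBcast i x => before tr t (Propose i x)
  | ArbDeliver _ _ _ => True            (* constrained by arb-broadcast properties *)
  | Send i j m =>
      match m with
      | DistributeS Sj =>
          (exists2 q, q \in Q i & forall k, k \in q -> exists x, Sst tr i t (k, x))
          /\ set_eq Sj (Sst tr i t)
      | Ack => exists Sj, before tr t (AddT i j Sj)
      | Ready => exists2 q, q \in Q i & recv_all tr i t q Ack
      | Confirm =>
          (exists2 q, q \in Q i & recv_all tr i t q Ready)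
          \/ (exists2 K, kernel Q i K & recv_all tr i t K Confirm)
      | DistributeT T =>
          (exists2 q, q \in Q i & recv_all tr i t q Confirm)
          /\ set_eq T (Tst tr i t)
      end
  | Recv i j m => before tr t (Send j i m)     (* authenticated reliable links *)
  | AddT i j Sj =>
      before tr t (Recv i j (DistributeS Sj))
      /\ (forall p, p \in Sj -> Sst tr i t p) /\ ~ sentT tr i t
  | AddU i j T =>
      before tr t (Recv i j (DistributeT T)) /\ (forall p, p \in T -> Sst tr i t p)
  | AgDeliver i U =>
      (exists2 q, q \in Q i & recv_all_kind tr i t q is_DistT)
      /\ set_eq U (Ust tr i t)
  end.

Definition actor (e : event) : P :=
  match e with
  | Propose i _ | ArbBcast i _ | ArbDeliver i _ _ | Send i _ _ | Recv i _ _
  | AddT i _ _ | AddU i _ _ | AgDeliver i _ => i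
  end.

(** Safety properties of asymmetric reliable broadcast used as an abstraction. *)
Definition arb_safety (F Q : P -> {set {set P}}) (Fset : {set P}) (tr : trace) : Prop :=
  (forall t i j x, i \notin Fset -> tr t = Some (ArbDeliver i j x) ->
      forall y, ~ before tr t (ArbDeliver i j y))
  /\ (forall t i j x, i \notin Fset -> j \notin Fset ->
      tr t = Some (ArbDeliver i j x) -> exists t', tr t' = Some (ArbBcast j x))
  /\ (forall t t' i i' j x x', i \in Gmax F Q Fset -> i' \in Gmax F Q Fset ->
      tr t = Some (ArbDeliver i j x) -> tr t' = Some (ArbDeliver i' j x') -> x = x').

Definition AG_execution (F Q : P -> {set {set P}}) (Fset : {set P}) (tr : trace) : Prop :=
  (forall t e, tr t = Some e -> actor e \notin Fset -> correct_step Q tr t e)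
  /\ arb_safety F Q Fset tr.

End AG.

Arguments Ack {n V}.
Arguments Ready {n V}.
Arguments Confirm {n V}.

(* A Confirm sent by a member of the maximal guild was triggered either by a
   quorum of Readys (rule 6), and we are done, or by Confirms from a kernel
   (rule 7).  A kernel meets every quorum, in particular a quorum of the sender
   contained in the maximal guild, so some guild member sent Confirm strictly
   earlier; well-founded induction on time concludes. *)
From mathcomp Require Import all_boot.
Set Implicit Arguments. Unset Strict Implicit. Unset Printing Implicit Defensive.

Section MaximalGuild.
Variables (n : nat) (F Q : 'I_n -> {set {set 'I_n}}) (Fset : {set 'I_n}).

Lemma mem_GmaxP (i : 'I_n) :
  reflect (exists2 G, guild F Q Fset G & i \in G) (i \in Gmax F Q Fset).
Proof. exact: bigcupP. Qed.

Lemma Gmax_correct (i : 'I_n) : i \in Gmax F Q Fset -> i \notin Fset.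
Proof.
case/mem_GmaxP=> G /forall_inP guildG /guildG /andP[/andP[] //].
Qed.

Lemma Gmax_quorum (i : 'I_n) :
  i \in Gmax F Q Fset -> exists2 q, q \in Q i & q \subset Gmax F Q Fset.
Proof.
case/mem_GmaxP=> G guildG iG.
move/forall_inP: (guildG) => /(_ i iG) /andP[_ /exists_inP[q qQ qG]].
exists q => //; apply: (subset_trans qG); apply/subsetP=> k kG.
by apply/mem_GmaxP; exists G.
Qed.

End MaximalGuild.

Lemma kernel_meets_quorum (n : nat) (Q : 'I_n -> {set {set 'I_n}}) i K q :
  kernel Q i K -> q \in Q i -> exists2 l, l \in K & l \in q.
Proof.
move=> /forall_inP /[apply] /set0Pn[l /setIP[lK lq]].
by exists l.
Qed.

Section Execution.
Variables (n : nat) (V : eqType) (F Q : 'I_n -> {set {set 'I_n}}).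
Variables (Fset : {set 'I_n}) (tr : trace n V).
Hypothesis exec : AG_execution F Q Fset tr.

Lemma recv_sent_before (i j : 'I_n) (m : msg n V) t :
  i \notin Fset -> tr t = Some (Recv i j m) -> before tr t (Send j i m).
Proof. by case: exec => step _ iF trt; apply: (step t _ trt iF). Qed.

Lemma confirm_rule (i j : 'I_n) t :
  i \notin Fset -> tr t = Some (Send i j Confirm) ->
  (exists2 q, q \in Q i & recv_all tr i t q Ready) \/
  (exists2 K, kernel Q i K & recv_all tr i t K Confirm).
Proof. by case: exec => step _ iF trt; apply: (step t _ trt iF). Qed.

Lemma Gmax_confirm_ready_quorum (i j : 'I_n) t :
  i \in Gmax F Q Fset -> tr t = Some (Send i j Confirm) ->
  exists2 k, k \in Gmax F Q Fset &
    exists2 q, q \in Q k & recv_all tr k t q Ready.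
Proof.
elim/ltn_ind: t i j => t IH i j iG trt.
have iF := Gmax_correct iG.
case: (confirm_rule iF trt) => [[q qQ readyq] | [K kerK confK]].
  by exists i => //; exists q.
have [q qQ qG] := Gmax_quorum iG.
have [l lK lq] := kernel_meets_quorum kerK qQ.
have [t1 lt1t recv_l] := confK l lK.
have [t2 lt21 send_l] := recv_sent_before iF recv_l.
have lt2t : t2 < t by exact: ltn_trans lt21 lt1t.
have [k kG [q' q'Q readyq']] := IH t2 lt2t l i (subsetP qG l lq) send_l.
exists k => //; exists q' => // r rq'.
have [t3 lt32 recv_r] := readyq' r rq'.
by exists t3 => //; exact: ltn_trans lt32 lt2t.
Qed.

End Execution.

Theorem lemma3p4 (n : nat) (V : eqType) (F Q : 'I_n -> {set {set 'I_n}})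
    (Fset : {set 'I_n}) (tr : trace n V) :
  asym_quorum_system F Q ->
  AG_execution F Q Fset tr ->
  has_guild F Q Fset ->
  forall (i j : 'I_n) (t : nat), i \in Gmax F Q Fset ->
    tr t = Some (Send i j Confirm) ->
  exists k : 'I_n, k \in Gmax F Q Fset /\
    exists2 q : {set 'I_n}, q \in Q k &
      forall l : 'I_n, l \in q -> exists t' : nat, tr t' = Some (Recv k l Ready).
Proof.
move=> _ exec _ i j t iG trt.
have [k kG [q qQ readyq]] := Gmax_confirm_ready_quorum exec iG trt.
exists k; split=> //; exists q => // l lq.
by have [t' _ recv] := readyq l lq; exists t'.
Qed.
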